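(* There is an absolute constant $C$ such that the following holds. Let $p$ be a real polynomial in $n$ variables of degree $d$ whose Hessian determinant $h_p(x)=\det(\nabla^2 p(x))$ is not identically zero. Then there is $a\in\mathbb{Z}^n$ with $\mathrm{bl}(a)\le C\, n\log(dn)$ such that $h_p(a)\neq0$.
   Context: For an integer $k$, $\mathrm{bl}(k)=\max\{1,\lceil\log_2|k|\rceil\}$; the bit length of an integer vector is the sum of the bit lengths of its entries. *)

From HB Require Import structures.
From mathcomp Require Import all_boot all_order all_algebra.
From mathcomp Require Import mpoly.
From mathcomp Require Import Rstruct.
From Stdlib Require Import Reals.
Set Implicit Arguments. Unset Strict Implicit. Unset Printing Implicit Defensive.
Import Order.TTheory GRing.Theory Num.Theory.
Local Open Scope ring_scope.

(* bit length of an integer: bl(k) = max{1, ceil(log2 |k|)}.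
   up_log 2 m is the least e with m <= 2^e, i.e. ceil(log2 m) for m >= 1. *)
Definition bl (k : int) : nat := maxn 1 (up_log 2 (absz k)).

Definition blvec (n : nat) (a : 'I_n -> int) : nat := (\sum_(i < n) bl (a i))%N.

Definition hessdet (n : nat) (p : {mpoly R[n]}) (x : 'I_n -> R) : R :=
  \det (\matrix_(i < n, j < n) (mderiv j (mderiv i p)).@[x]).

From HB Require Import structures.
From mathcomp Require Import all_boot all_order all_algebra.
From mathcomp Require Import mpoly perm.
From mathcomp Require Import Rstruct.
From Stdlib Require Import Reals Lra Classical.
Import Order.TTheory GRing.Theory Num.Theory.
Local Open Scope ring_scope.
Set Implicit Arguments. Unset Strict Implicit.

(* The Hessian determinant h_p is itself a polynomial, of total degree at
   most n d.  A polynomial of total degree at most k that vanishes on the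
   grid S^n, with |S| = k + 1, vanishes everywhere: restricted to a
   coordinate line it is a univariate polynomial of degree at most k with
   k + 1 roots, so the grid can be filled one coordinate at a time.  Hence
   h_p is nonzero at some point of {0, ..., n d}^n, whose entries have bit
   length at most bl(n d) = O(log (n d)). *)

Section CoordinateLine.
Variables (R : comNzRingType) (n : nat).
Implicit Types (q : {mpoly R[n]}) (x : 'I_n -> R).

Definition mline q x (t : 'I_n) : {poly R} :=
  mmap (@polyC R) (fun i => if i == t then 'X else (x i)%:P) q.

Lemma horner_mline q x t c :
  (mline q x t).[c] = q.@[fun i => if i == t then c else x i].
Proof.
rewrite /mline /mmap mevalE horner_sum; apply: eq_bigr => m _.
rewrite hornerCM /mmap1 horner_prod; congr (_ * _); apply: eq_bigr => i _.
by rewrite horner_exp; case: eqP => _; rewrite ?hornerX ?hornerC.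
Qed.

Lemma size_mline q x t : (size (mline q x t) <= msize q)%nat.
Proof.
rewrite /mline /mmap; apply: leq_trans (size_sum _ _ _) _.
apply/bigmax_leqP_seq => m qm _.
have -> : mmap1 (fun i => if i == t then 'X else (x i)%:P) m
        = (\prod_(i | i != t) x i ^+ m i) *: 'X^(m t).
  rewrite /mmap1 (bigD1 t) //= eqxx mulrC -mul_polyC rmorph_prod.
  by congr (_ * _); apply: eq_bigr => i /negbTE ->; rewrite rmorphXn.
rewrite mul_polyC; do 2!apply: leq_trans (size_scale_leq _ _) _.
rewrite size_polyXn; apply: leq_ltn_trans (msize_mdeg_lt qm).
by rewrite mdegE (bigD1 t) //= leq_addr.
Qed.

End CoordinateLine.

Section GridVanishing.
Variables (R : idomainType) (n : nat) (S : seq R) (q : {mpoly R[n]}).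
Hypotheses (uniqS : uniq S) (msize_q : (msize q <= size S)%nat).

Lemma meval_eq0_grid :
  (forall y, (forall i, y i \in S) -> q.@[y] = 0) -> forall x, q.@[x] = 0.
Proof.
move=> q0_grid.
suff q0_tail t x : (forall i : 'I_n, (t <= i)%nat -> x i \in S) -> q.@[x] = 0.
  by move=> x; apply: (q0_tail n) => i; rewrite leqNgt ltn_ord.
elim: t x => [|t IHt] x Sx; first by apply: q0_grid => i; apply: Sx.
have [n_le_t | t_lt_n] := leqP n t.
  by apply: IHt => i; rewrite leqNgt (leq_trans (ltn_ord i)).
pose t' := Ordinal t_lt_n.
have line0 : mline q x t' = 0.
  apply: roots_geq_poly_eq0 uniqS (leq_trans (size_mline _ _ _) msize_q).
  apply/allP => c Sc; apply/rootP; rewrite horner_mline; apply: IHt => i le_ti.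
  case: eqP => [// | /eqP ne_it]; apply: Sx.
  rewrite ltn_neqAle le_ti andbT; apply: contra ne_it => /eqP t_i.
  by apply/eqP/val_inj; rewrite /= t_i.
have := horner_mline q x t' (x t'); rewrite line0 horner0 => ->.
by apply: meval_eq => i; case: eqP => [->|].
Qed.

Lemma meval_neq0_grid :
  (exists x, q.@[x] != 0) -> exists2 y, (forall i, y i \in S) & q.@[y] != 0.
Proof.
move=> [x qx0]; apply: NNPP => no_grid_point; move/eqP: qx0; apply.
apply: meval_eq0_grid => y Sy; apply/eqP; apply: contraT => qy0.
by case: no_grid_point; exists y.
Qed.

End GridVanishing.

Lemma meval_neq0_nat_grid (R : numDomainType) n (q : {mpoly R[n]}) k :
  (msize q <= k.+1)%nat -> (exists x, q.@[x] != 0) ->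
  exists2 b : 'I_n -> nat, (forall i, b i <= k)%nat & q.@[fun i => (b i)%:R] != 0.
Proof.
move=> msize_q q_neq0; pose S := [seq (j%:R : R) | j <- iota 0 k.+1].
have uniqS : uniq S.
  by rewrite map_inj_uniq ?iota_uniq // => i j /eqP; rewrite eqr_nat => /eqP.
have msize_qS : (msize q <= size S)%nat by rewrite size_map size_iota.
have [y Sy qy] := meval_neq0_grid uniqS msize_qS q_neq0.
have index_lt i : (index (y i) S < k.+1)%nat.
  by move: (Sy i); rewrite -index_mem size_map size_iota.
exists (fun i => index (y i) S) => [i | ]; first by rewrite -ltnS.
rewrite (meval_eq _ (v2 := y)) // => i.
by rewrite -[RHS](nth_index 0 (Sy i)) (nth_map 0%nat) ?size_iota ?nth_iota.
Qed.

Section Derivatives.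
Variables (R : nzRingType) (n : nat).
Implicit Types (p : {mpoly R[n]}).

Lemma msize_mderiv p i : (msize (mderiv i p) <= (msize p).-1)%nat.
Proof.
rewrite [msize (mderiv i p)]msizeE; apply/bigmax_leqP_seq => m pm _.
have : (m + U_(i))%MM \in msupp p.
  move: pm; rewrite !mcoeff_msupp mcoeff_mderiv.
  by apply: contra => /eqP ->; rewrite mul0rn.
by move/msize_mdeg_lt; rewrite mdegD mdeg1 addn1; case: (msize p).
Qed.

Lemma msize_mderiv2 p i j : (msize (mderiv j (mderiv i p)) <= (msize p).-2)%nat.
Proof.
apply: leq_trans (msize_mderiv _ _) _; have := msize_mderiv p i.
by rewrite -!subn1 => /(leq_sub2r 1).
Qed.

End Derivatives.

Section DegreeBounds.
Variables (R : idomainType) (n : nat).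

Lemma msize_prod_le (I : Type) (r : seq I) (F : I -> {mpoly R[n]}) e :
  (forall i, msize (F i) <= e.+1)%nat -> (msize (\prod_(i <- r) F i) <= (size r * e).+1)%nat.
Proof.
move=> msizeF; elim: r => [|i r IHr]; first by rewrite big_nil msize1.
rewrite big_cons /=.
have [->|Fi0] := eqVneq (F i) 0; first by rewrite mul0r msize0.
have [->|prod0] := eqVneq (\prod_(j <- r) F j) 0; first by rewrite mulr0 msize0.
rewrite msizeM // mulSn -subn1 leq_subLR add1n -addnS -addSn.
exact: leq_add (msizeF i) IHr.
Qed.

Lemma msize_det m (A : 'M[{mpoly R[n]}]_m) e :
  (forall i j, msize (A i j) <= e.+1)%nat -> (msize (\det A) <= (m * e).+1)%nat.
Proof.
move=> msizeA; apply: leq_trans (msize_sum _ _ _) _; apply/bigmax_leqP => s _.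
have := msize_prod_le (index_enum 'I_m) (fun i => msizeA i ((s : 'S_m) i)).
rewrite [index_enum _]unlock -enumT size_enum_ord => msize_prod.
by rewrite -signr_odd; case: (odd _); rewrite ?expr1 ?expr0 ?mulN1r ?mul1r ?msizeN.
Qed.

End DegreeBounds.

Definition mhessian (R : nzRingType) n (p : {mpoly R[n]}) : 'M[{mpoly R[n]}]_n :=
  \matrix_(i, j) mderiv j (mderiv i p).

Lemma hessdetE n (p : {mpoly R[n]}) x : hessdet p x = (\det (mhessian p)).@[x].
Proof.
rewrite /hessdet -det_map_mx; congr (\det _); apply/matrixP => i j.
by rewrite !mxE.
Qed.

Lemma msize_det_mhessian (R : idomainType) n (p : {mpoly R[n]}) :
  (msize (\det (mhessian p)) <= (n * (msize p).-1).+1)%nat.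
Proof.
apply: msize_det => i j; rewrite mxE.
by apply: leq_trans (msize_mderiv2 _ _ _) (leq_trans (leq_pred _) (leqnSn _)).
Qed.

Lemma det_mhessian_small (R : comNzRingType) n (p : {mpoly R[n]}) :
  (0 < n)%nat -> (msize p <= 2)%nat -> \det (mhessian p) = 0.
Proof.
case: n p => // n p _ msize_p; suff -> : mhessian p = 0 by rewrite det0.
apply/matrixP => i j; rewrite !mxE; apply/eqP; rewrite -msize_poly_eq0 -leqn0.
apply: leq_trans (msize_mderiv2 _ _ _) _.
by case: (msize p) msize_p => [|[|[]]].
Qed.

Lemma leq_bl (k l : int) : (absz k <= absz l)%nat -> (bl k <= bl l)%nat.
Proof.
by move=> le_kl; rewrite /bl geq_max leq_maxl (leq_trans (leq_up_log 2 le_kl)) ?leq_maxr.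
Qed.

Lemma blvec_le n (a : 'I_n -> int) N :
  (forall i, absz (a i) <= N)%nat -> (blvec a <= n * bl N)%nat.
Proof.
move=> a_le; change (\sum_(i < n) bl (a i) <= n * bl N)%nat.
apply: (@leq_trans (\sum_(i < n) bl N)); first by apply: leq_sum => i _; apply: leq_bl.
by rewrite sum_nat_const card_ord.
Qed.

Lemma bl_le_ln (k : int) : (2 <= absz k)%nat -> (bl k)%:R <= 4 * ln (absz k)%:R.
Proof.
set N := absz k => N_gt1; rewrite /bl.
have e_gt0 : (0 < up_log 2 N)%nat by rewrite up_log_gt0.
have pow_lt_N : (2%:R ^+ (up_log 2 N).-1 < N%:R :> R).
  by rewrite -natrX ltr_nat up_log_gtn.
rewrite (maxn_idPr e_gt0) -(prednK e_gt0); move: (up_log 2 N).-1 pow_lt_N => e.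
rewrite -RpowE -!INRE (_ : INR 2 = 2%R) => [/RltP pow_lt_N|]; last by rewrite /=; lra.
rewrite -RmultE; apply/RleP.
have ln2_pos := ln_lt_2.
have two_le_N : (2 <= INR N)%R.
  by have := le_INR 2 N (ssrnat.leP N_gt1); rewrite /=; lra.
have ln2_le_lnN : (ln 2 <= ln (INR N))%R.
  case: (Rle_lt_or_eq_dec _ _ two_le_N) => [lt2N | <-]; last lra.
  by apply: Rlt_le; apply: ln_increasing; lra.
have e_ln2_lt : (INR e * ln 2 < ln (INR N))%R.
  by rewrite -ln_pow; [apply: ln_increasing; [apply: pow_lt|] | ]; lra.
have : (0 <= INR e * (ln 2 - / 2))%R by apply: Rmult_le_pos; [apply: pos_INR | lra].
rewrite S_INR /=; lra.
Qed.

Theorem corollary4p6 :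
  exists C : R,
    forall (n d : nat) (p : {mpoly R[n]}),
      msize p = d.+1 ->
      (exists x : 'I_n -> R, hessdet p x != 0) ->
      exists a : 'I_n -> int,
        ((blvec a)%:R <= C * n%:R * ln ((d * n)%:R)) /\
        hessdet p (fun i => (a i)%:~R) != 0.
Proof.
exists 4 => n d p msize_p [x]; rewrite hessdetE => hx.
have msize_H : (msize (\det (mhessian p)) <= (d * n).+1)%nat.
  by move: (msize_det_mhessian p); rewrite msize_p mulnC.
have [b b_le Hb] := meval_neq0_nat_grid msize_H (ex_intro _ x hx).
exists (fun i => Posz (b i)); split; last by rewrite hessdetE.
apply: le_trans (_ : (n * bl (d * n)%nat)%:R <= _); first by rewrite ler_nat blvec_le.
have [-> | n_gt0] := posnP n; first by rewrite !(mul0n, mulr0, mul0r).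
have d_gt1 : (1 < d)%nat.
  rewrite ltnNge; apply: contraNN hx => d_le1.
  by rewrite det_mhessian_small ?msize_p ?meval0.
rewrite natrM -mulrA mulrCA; apply: ler_wpM2l; first exact: ler0n.
by apply: bl_le_ln; rewrite /= -[2%nat]muln1 leq_mul.
Qed.
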